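(* Let $(u,v)$ be a $C^3$ solution of system (W) on an open set $U\subseteq\mathbb{R}^2$. If $u_y\neq0$ on $U$, then $\partial_x\beta_1=0$ and $\partial_x\beta_3=0$ on $U$ (so $\beta_1,\partial_y\beta_1,\beta_3$ are functions of $y$ alone). If $v_x\neq0$ on $U$, then $\partial_y\alpha_1=0$ and $\partial_y\alpha_3=0$ on $U$ (so $\alpha_1,\partial_x\alpha_1,\alpha_3$ are functions of $x$ alone).
   Context: System (W): $u_{xy}+\frac{u_xu_y}{2(1+e^{(u+v)/2})}=0$, $v_{xy}+\frac{v_xv_y}{2(1+e^{(u+v)/2})}=0$. Define \[ \beta_1=\frac{u_yv_y}{1+e^{-(u+v)/2}},\quad \beta_3=\frac{2u_{yy}+u_y^2-\beta_1}{u_y},\quad \alpha_1=\frac{u_xv_x}{1+e^{-(u+v)/2}},\quad \alpha_3=\frac{2v_{xx}+v_x^2-\alpha_1}{v_x}. \] *)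

From Stdlib Require Import Reals.
Open Scope R_scope.

Definition open2 (U : R -> R -> Prop) : Prop :=
  forall x y, U x y -> exists d, 0 < d /\
    forall x' y', Rabs (x' - x) < d -> Rabs (y' - y) < d -> U x' y'.

Definition cont2_on (U : R -> R -> Prop) (f : R -> R -> R) : Prop :=
  forall x y, U x y -> forall eps, 0 < eps -> exists d, 0 < d /\
    forall x' y', Rabs (x' - x) < d -> Rabs (y' - y) < d ->
      Rabs (f x' y' - f x y) < eps.

Definition is_dx (U : R -> R -> Prop) (f g : R -> R -> R) : Prop :=
  forall x y, U x y -> derivable_pt_lim (fun t => f t y) x (g x y).
Definition is_dy (U : R -> R -> Prop) (f g : R -> R -> R) : Prop :=
  forall x y, U x y -> derivable_pt_lim (fun t => f x t) y (g x y).

Fixpoint Ck (k : nat) (U : R -> R -> Prop) (f : R -> R -> R) : Prop :=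
  match k with
  | O => cont2_on U f
  | S k' => cont2_on U f /\ exists gx gy, is_dx U f gx /\ is_dy U f gy /\
              Ck k' U gx /\ Ck k' U gy
  end.

Definition beta1 (u v uy vy : R -> R -> R) (x y : R) : R :=
  uy x y * vy x y / (1 + exp (- (u x y + v x y) / 2)).
Definition beta3 (u v uy uyy vy : R -> R -> R) (x y : R) : R :=
  (2 * uyy x y + uy x y ^ 2 - beta1 u v uy vy x y) / uy x y.
Definition alpha1 (u v ux vx : R -> R -> R) (x y : R) : R :=
  ux x y * vx x y / (1 + exp (- (u x y + v x y) / 2)).
Definition alpha3 (u v ux vx vxx : R -> R -> R) (x y : R) : R :=
  (2 * vxx x y + vx x y ^ 2 - alpha1 u v ux vx x y) / vx x y.

(* Write s = u + v and k(s) = 2 (1 + e^(s/2)), so that (W) reads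
   u_xy = - u_x u_y / k(s) and v_xy = - v_x v_y / k(s).  Along a horizontal
   line y = const the functions a = u_y, b = v_y then satisfy the linear
   equations a_x = - u_x a / k(s), b_x = - v_x b / k(s) with s_x = u_x + v_x;
   a direct computation shows that a b / (1 + e^(-s/2)) = beta_1 is constant,
   and, once the derivative c_x of c = u_yy is known, that beta_3 is constant.
   The value of c_x = (u_xy)_y comes from differentiating the first equation
   of (W) in y.  The alpha quantities come from the same computation along
   vertical lines, with a = v_x, b = u_x, c = v_xx, where c_y = (v_xy)_x is
   obtained by differentiating the second equation of (W) in x. *)

From Stdlib Require Import Reals Lra.
From Coquelicot Require Import Coquelicot.
Open Scope R_scope.

Definition coupling (s : R) : R := 2 * (1 + exp (s / 2)).

Definition sum_uv (u v : R -> R -> R) (x y : R) : R := u x y + v x y.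

Definition W_equation (U : R -> R -> Prop) (fx fy fxy s : R -> R -> R) : Prop :=
  forall x y, U x y -> fxy x y + fx x y * fy x y / coupling (s x y) = 0.

(* The derivative of the right-hand side - P Q / k(s) of (W), given the
   values P, Q, s and their derivatives P', Q', s'. *)
Definition rhs_deriv (P Q s P' Q' s' : R) : R :=
  - ((P' * Q + P * Q') / coupling s
     - P * Q * (exp (s / 2) * s') / coupling s ^ 2).

Lemma Derive_of (f : R -> R) x l :
  derivable_pt_lim f x l -> Derive (fun t : R => f t) x = l.
Proof. intros H. apply is_derive_unique, is_derive_Reals, H. Qed.

Lemma ex_derive_of (f : R -> R) x l : derivable_pt_lim f x l -> ex_derive f x.
Proof. intros H. exists l. apply is_derive_Reals, H. Qed.

Lemma derivable_pt_lim_local f g x l d :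
  0 < d -> (forall t, Rabs (t - x) < d -> f t = g t) ->
  derivable_pt_lim g x l -> derivable_pt_lim f x l.
Proof.
  intros Hd Hfg Hg eps Heps. destruct (Hg eps Heps) as [del Hdel].
  assert (Hm : 0 < Rmin del d) by (apply Rmin_pos; [apply cond_pos | lra]).
  exists (mkposreal _ Hm). intros h Hh Hhd. simpl in Hhd.
  rewrite (Hfg x), (Hfg (x + h)).
  - apply Hdel; auto. apply Rlt_le_trans with (1 := Hhd), Rmin_l.
  - replace (x + h - x) with h by ring. apply Rlt_le_trans with (1 := Hhd), Rmin_r.
  - rewrite Rminus_diag, Rabs_R0. lra.
Qed.

(* e^(-s/2) = 1 / e^(s/2), in the form produced by [auto_derive]. *)
Lemma exp_neg_half z : exp (- z * / 2) = / exp (z / 2).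
Proof. rewrite <- exp_Ropp. f_equal. field. Qed.

Lemma rhs_derivative (P Q s : R -> R) t P' Q' s' :
  derivable_pt_lim P t P' -> derivable_pt_lim Q t Q' -> derivable_pt_lim s t s' ->
  derivable_pt_lim (fun t => - (P t * Q t / coupling (s t))) t
    (rhs_deriv (P t) (Q t) (s t) P' Q' s').
Proof.
  intros HP HQ Hs. pose proof (exp_pos (s t / 2)) as Epos.
  apply is_derive_Reals. unfold coupling. auto_derive.
  - repeat split; try (eapply ex_derive_of; eassumption). lra.
  - rewrite (Derive_of _ _ _ HP), (Derive_of _ _ _ HQ), (Derive_of _ _ _ Hs).
    unfold rhs_deriv, coupling, Rdiv. field; lra.
Qed.

Lemma product_first_integral (s a b : R -> R) p q a' b' t :
  derivable_pt_lim s t (p + q) -> derivable_pt_lim a t a' -> derivable_pt_lim b t b' ->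
  a' + p * a t / coupling (s t) = 0 -> b' + q * b t / coupling (s t) = 0 ->
  derivable_pt_lim (fun t => a t * b t / (1 + exp (- s t / 2))) t 0.
Proof.
  intros Hs Ha Hb Ea Eb. pose proof (exp_pos (s t / 2)) as Epos.
  unfold coupling in Ea, Eb.
  apply is_derive_Reals. auto_derive.
  - repeat split; try (eapply ex_derive_of; eassumption).
    pose proof (exp_pos (- s t * / 2)). lra.
  - rewrite (Derive_of _ _ _ Ha), (Derive_of _ _ _ Hb), (Derive_of _ _ _ Hs),
      exp_neg_half.
    replace a' with (- (p * a t / (2 * (1 + exp (s t / 2))))) by lra.
    replace b' with (- (q * b t / (2 * (1 + exp (s t / 2))))) by lra.
    unfold Rdiv. field; lra.
Qed.

Lemma quotient_first_integral (s a b c w : R -> R) p a' c' t :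
  derivable_pt_lim a t a' -> derivable_pt_lim c t c' -> derivable_pt_lim w t 0 ->
  a' + p * a t / coupling (s t) = 0 ->
  w t = a t * b t / (1 + exp (- s t / 2)) ->
  c' = rhs_deriv p (a t) (s t) a' (c t) (a t + b t) ->
  a t <> 0 ->
  derivable_pt_lim (fun t => (2 * c t + a t ^ 2 - w t) / a t) t 0.
Proof.
  intros Ha Hc Hw Ea Ew Ec Ha0. pose proof (exp_pos (s t / 2)) as Epos.
  unfold coupling in Ea.
  apply is_derive_Reals. auto_derive.
  - repeat split; try (eapply ex_derive_of; eassumption). exact Ha0.
  - rewrite (Derive_of _ _ _ Ha), (Derive_of _ _ _ Hc), (Derive_of _ _ _ Hw), Ew, Ec.
    replace a' with (- (p * a t / (2 * (1 + exp (s t / 2))))) by lra.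
    replace (- s t / 2) with (- (s t / 2)) by field. rewrite exp_Ropp.
    unfold rhs_deriv, coupling, Rdiv. field; lra.
Qed.

Section OpenSet.

Variable U : R -> R -> Prop.
Hypothesis U_open : open2 U.

Lemma open2_box x y : U x y -> exists d, 0 < d /\ forall a b,
  Rabs (a - x) < d -> Rabs (b - y) < d -> U a b /\
  (forall z, Rabs (z - a) < d -> U z b) /\ (forall z, Rabs (z - b) < d -> U a z).
Proof.
  intros Hxy. destruct (U_open x y Hxy) as [d [Hd H]]. exists (d / 2). split; [lra |].
  intros a b Ha Hb. split; [apply H; lra |]. split; intros z Hz; apply H.
  - replace (z - x) with ((z - a) + (a - x)) by ring.
    eapply Rle_lt_trans; [apply Rabs_triang | lra].
  - lra.
  - lra.
  - replace (z - y) with ((z - b) + (b - y)) by ring.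
    eapply Rle_lt_trans; [apply Rabs_triang | lra].
Qed.

Lemma Rabs_diag_lt x d : 0 < d -> Rabs (x - x) < d.
Proof. intros Hd. rewrite Rminus_diag, Rabs_R0. exact Hd. Qed.

Lemma dx_local (f g : R -> R -> R) x y l :
  (forall a b, U a b -> f a b = g a b) -> U x y ->
  derivable_pt_lim (fun t => g t y) x l -> derivable_pt_lim (fun t => f t y) x l.
Proof.
  intros Hfg Hxy. destruct (open2_box x y Hxy) as [d [Hd Hbox]].
  apply derivable_pt_lim_local with (d := d); auto.
  intros t Ht. apply Hfg, (Hbox x y (Rabs_diag_lt x d Hd) (Rabs_diag_lt y d Hd)), Ht.
Qed.

Lemma dy_local (f g : R -> R -> R) x y l :
  (forall a b, U a b -> f a b = g a b) -> U x y ->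
  derivable_pt_lim (fun t => g x t) y l -> derivable_pt_lim (fun t => f x t) y l.
Proof.
  intros Hfg Hxy. destruct (open2_box x y Hxy) as [d [Hd Hbox]].
  apply derivable_pt_lim_local with (d := d); auto.
  intros t Ht. apply Hfg, (Hbox x y (Rabs_diag_lt x d Hd) (Rabs_diag_lt y d Hd)), Ht.
Qed.

Lemma is_dx_unique f g1 g2 x y : is_dx U f g1 -> is_dx U f g2 -> U x y -> g1 x y = g2 x y.
Proof. intros H1 H2 H. eapply uniqueness_limite; [apply H1 | apply H2]; auto. Qed.

Lemma is_dy_unique f g1 g2 x y : is_dy U f g1 -> is_dy U f g2 -> U x y -> g1 x y = g2 x y.
Proof. intros H1 H2 H. eapply uniqueness_limite; [apply H1 | apply H2]; auto. Qed.

Lemma cont2_on_ext f g :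
  (forall x y, U x y -> f x y = g x y) -> cont2_on U f -> cont2_on U g.
Proof.
  intros Hfg Hf x y Hxy eps Heps.
  destruct (U_open x y Hxy) as [d0 [Hd0 H0]]. destruct (Hf x y Hxy eps Heps) as [d1 [Hd1 H1]].
  exists (Rmin d0 d1). split; [now apply Rmin_pos |].
  intros x' y' Hx Hy. pose proof (Rmin_l d0 d1). pose proof (Rmin_r d0 d1).
  rewrite <- !Hfg by (auto; apply H0; lra). apply H1; lra.
Qed.

Lemma Ck_ext k f g : (forall x y, U x y -> f x y = g x y) -> Ck k U f -> Ck k U g.
Proof.
  destruct k as [| k]; simpl.
  - apply cont2_on_ext.
  - intros Hfg [Hc [gx [gy [Hgx [Hgy Cs]]]]]. split; [now apply (cont2_on_ext f) |].
    exists gx, gy. split; [| split; [| exact Cs]]; intros x y Hxy.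
    + apply (dx_local g f); auto. intros a b Hab. symmetry. auto.
    + apply (dy_local g f); auto. intros a b Hab. symmetry. auto.
Qed.

Lemma Ck_dx k f fx : Ck (S k) U f -> is_dx U f fx -> Ck k U fx.
Proof.
  intros [_ [gx [_ [Hgx [_ [Cgx _]]]]]] Hfx.
  apply (Ck_ext k gx); auto. intros x y Hxy. apply (is_dx_unique f); auto.
Qed.

Lemma Ck_dy k f fy : Ck (S k) U f -> is_dy U f fy -> Ck k U fy.
Proof.
  intros [_ [_ [gy [_ [Hgy [_ Cgy]]]]]] Hfy.
  apply (Ck_ext k gy); auto. intros x y Hxy. apply (is_dy_unique f); auto.
Qed.

Lemma Ck_pred k f : Ck (S k) U f -> Ck k U f.
Proof.
  revert f; induction k as [| k IH]; intros f Hf.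
  - exact (proj1 Hf).
  - destruct Hf as [Hc [gx [gy [Hgx [Hgy [Cgx Cgy]]]]]].
    split; [exact Hc |]. exists gx, gy. auto.
Qed.

Lemma Ck_has_dx k f : Ck (S k) U f -> exists fx, is_dx U f fx.
Proof. intros [_ [gx [_ [Hgx _]]]]. now exists gx. Qed.

Lemma Ck_has_dy k f : Ck (S k) U f -> exists fy, is_dy U f fy.
Proof. intros [_ [_ [gy [_ [Hgy _]]]]]. now exists gy. Qed.

Lemma continuity_2d_pt_local F g x y d :
  0 < d -> (forall a b, Rabs (a - x) < d -> Rabs (b - y) < d -> F a b = g a b) ->
  cont2_on U g -> U x y -> continuity_2d_pt F x y.
Proof.
  intros Hd HFg Hg Hxy eps. destruct (Hg x y Hxy eps (cond_pos eps)) as [d1 [Hd1 H1]].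
  assert (Hm : 0 < Rmin d d1) by (apply Rmin_pos; lra).
  exists (mkposreal _ Hm). simpl. intros a b Ha Hb.
  pose proof (Rmin_l d d1). pose proof (Rmin_r d d1).
  rewrite (HFg a b), (HFg x y) by (try apply Rabs_diag_lt; lra). apply H1; lra.
Qed.

Lemma schwarz_on f fx fy fxy fyx :
  is_dx U f fx -> is_dy U f fy -> is_dy U fx fxy -> is_dx U fy fyx ->
  cont2_on U fxy -> cont2_on U fyx ->
  forall x y, U x y -> fxy x y = fyx x y.
Proof.
  intros Hfx Hfy Hfxy Hfyx Cxy Cyx x y Hxy.
  destruct (open2_box x y Hxy) as [d [Hd Hbox]].
  (* Near (x, y), Coquelicot's iterated derivatives are the given partials. *)
  assert (Dyx : forall a b, Rabs (a - x) < d -> Rabs (b - y) < d ->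
    derivable_pt_lim (fun z => Derive (fun t => f z t) b) a (fyx a b)).
  { intros a b Ha Hb. destruct (Hbox a b Ha Hb) as [Hab [Hhor _]].
    apply derivable_pt_lim_local with (g := fun z => fy z b) (d := d); auto.
    intros z Hz. apply Derive_of, Hfy, Hhor, Hz. }
  assert (Dxy : forall a b, Rabs (a - x) < d -> Rabs (b - y) < d ->
    derivable_pt_lim (fun z => Derive (fun t => f t z) a) b (fxy a b)).
  { intros a b Ha Hb. destruct (Hbox a b Ha Hb) as [Hab [_ Hver]].
    apply derivable_pt_lim_local with (g := fun z => fx a z) (d := d); auto.
    intros z Hz. apply Derive_of, Hfx, Hver, Hz. }
  pose proof (Rabs_diag_lt x d Hd) as Hx. pose proof (Rabs_diag_lt y d Hd) as Hy.
  rewrite <- (Derive_of _ _ _ (Dxy x y Hx Hy)), <- (Derive_of _ _ _ (Dyx x y Hx Hy)).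
  symmetry. apply Schwarz.
  - exists (mkposreal d Hd). simpl. intros a b Ha Hb.
    destruct (Hbox a b Ha Hb) as [Hab _].
    repeat split; eapply ex_derive_of; [apply Hfx | apply Hfy | apply Dyx | apply Dxy]; auto.
  - apply (continuity_2d_pt_local _ fyx x y d); auto.
    intros a b Ha Hb. apply Derive_of, Dyx; auto.
  - apply (continuity_2d_pt_local _ fxy x y d); auto.
    intros a b Ha Hb. apply Derive_of, Dxy; auto.
Qed.

Lemma C2_mixed_partials f fx fy h :
  Ck 2 U f -> is_dx U f fx -> is_dy U f fy -> (is_dy U fx h <-> is_dx U fy h).
Proof.
  intros Cf Hfx Hfy.
  destruct (Ck_dx 1 f fx Cf Hfx) as [_ [_ [gxy [_ [Hgxy [_ Cgxy]]]]]].
  destruct (Ck_dy 1 f fy Cf Hfy) as [_ [gyx [_ [Hgyx [_ [Cgyx _]]]]]].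
  pose proof (schwarz_on f fx fy gxy gyx Hfx Hfy Hgxy Hgyx Cgxy Cgyx) as Hsym.
  split; intros Hh x y Hxy.
  - rewrite (is_dy_unique fx h gxy x y), Hsym; auto.
  - rewrite (is_dx_unique fy h gyx x y), <- Hsym; auto.
Qed.

Lemma pde_dy fx fy fxy s x y P' Q' s' :
  W_equation U fx fy fxy s -> U x y ->
  derivable_pt_lim (fun t => fx x t) y P' -> derivable_pt_lim (fun t => fy x t) y Q' ->
  derivable_pt_lim (fun t => s x t) y s' ->
  derivable_pt_lim (fun t => fxy x t) y (rhs_deriv (fx x y) (fy x y) (s x y) P' Q' s').
Proof.
  intros Hpde Hxy HP HQ Hs.
  apply (dy_local fxy (fun a b => - (fx a b * fy a b / coupling (s a b)))); auto.
  - intros a b Hab. pose proof (Hpde a b Hab). lra.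
  - now apply (rhs_derivative (fun t => fx x t) (fun t => fy x t) (fun t => s x t)).
Qed.

Lemma pde_dx fx fy fxy s x y P' Q' s' :
  W_equation U fx fy fxy s -> U x y ->
  derivable_pt_lim (fun t => fx t y) x P' -> derivable_pt_lim (fun t => fy t y) x Q' ->
  derivable_pt_lim (fun t => s t y) x s' ->
  derivable_pt_lim (fun t => fxy t y) x (rhs_deriv (fx x y) (fy x y) (s x y) P' Q' s').
Proof.
  intros Hpde Hxy HP HQ Hs.
  apply (dx_local fxy (fun a b => - (fx a b * fy a b / coupling (s a b)))); auto.
  - intros a b Hab. pose proof (Hpde a b Hab). lra.
  - now apply (rhs_derivative (fun t => fx t y) (fun t => fy t y) (fun t => s t y)).
Qed.

Lemma beta_first_integrals u v ux uy uxy uyy vx vy vxy uxyy x y :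
  is_dx U u ux -> is_dy U u uy -> is_dy U ux uxy -> is_dy U uy uyy ->
  is_dx U v vx -> is_dy U v vy ->
  is_dx U uy uxy -> is_dx U vy vxy -> is_dx U uyy uxyy -> is_dy U uxy uxyy ->
  W_equation U ux uy uxy (sum_uv u v) -> W_equation U vx vy vxy (sum_uv u v) ->
  U x y -> uy x y <> 0 ->
  derivable_pt_lim (fun t => beta1 u v uy vy t y) x 0 /\
  derivable_pt_lim (fun t => beta3 u v uy uyy vy t y) x 0.
Proof.
  intros Hux Huy Huxy Huyy Hvx Hvy Huyx Hvyx Huyyx Huxyy Pu Pv Hxy Huy0.
  assert (Hs : derivable_pt_lim (fun t => sum_uv u v t y) x (ux x y + vx x y))
    by (apply derivable_pt_lim_plus; auto).
  assert (B1 : derivable_pt_lim (fun t => beta1 u v uy vy t y) x 0)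
    by (apply (product_first_integral (fun t => sum_uv u v t y) _ _ (ux x y) (vx x y)
          (uxy x y) (vxy x y)); auto).
  split; [exact B1 |].
  apply (quotient_first_integral (fun t => sum_uv u v t y) (fun t => uy t y)
    (fun t => vy t y) (fun t => uyy t y) _ (ux x y) (uxy x y) (uxyy x y)); auto.
  (* u_xyy is the derivative of the right-hand side of (W) in y. *)
  apply (uniqueness_limite (fun t => uxy x t) y); [apply Huxyy; auto |].
  apply pde_dy; auto. apply derivable_pt_lim_plus; auto.
Qed.

Lemma alpha_first_integrals u v ux uy uxy vx vy vxy vxx vxyx x y :
  is_dx U u ux -> is_dy U u uy -> is_dy U ux uxy ->
  is_dx U v vx -> is_dy U v vy -> is_dy U vx vxy -> is_dx U vx vxx ->
  is_dx U vy vxy -> is_dx U vxy vxyx -> is_dy U vxx vxyx ->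
  W_equation U ux uy uxy (sum_uv u v) -> W_equation U vx vy vxy (sum_uv u v) ->
  U x y -> vx x y <> 0 ->
  derivable_pt_lim (fun t => alpha1 u v ux vx x t) y 0 /\
  derivable_pt_lim (fun t => alpha3 u v ux vx vxx x t) y 0.
Proof.
  intros Hux Huy Huxy Hvx Hvy Hvxy Hvxx Hvyx Hvxyx Hvxxy Pu Pv Hxy Hvx0.
  assert (A1 : derivable_pt_lim (fun t => alpha1 u v ux vx x t) y 0).
  { apply (product_first_integral (fun t => sum_uv u v x t) _ _ (uy x y) (vy x y)
      (uxy x y) (vxy x y)); auto.
    - apply derivable_pt_lim_plus; auto.
    - rewrite Rmult_comm. apply Pu, Hxy.
    - rewrite Rmult_comm. apply Pv, Hxy. }
  split; [exact A1 |].
  apply (quotient_first_integral (fun t => sum_uv u v x t) (fun t => vx x t)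
    (fun t => ux x t) (fun t => vxx x t) _ (vy x y) (vxy x y) (vxyx x y)); auto.
  - rewrite Rmult_comm. apply Pv, Hxy.
  - unfold alpha1, sum_uv. now rewrite (Rmult_comm (vx x y)).
  - (* v_xyx is the derivative of the right-hand side of (W) in x. *)
    transitivity (rhs_deriv (vx x y) (vy x y) (sum_uv u v x y) (vxx x y) (vxy x y)
      (ux x y + vx x y)).
    + apply (uniqueness_limite (fun t => vxy t y) x); [apply Hvxyx; auto |].
      apply pde_dx; auto. apply derivable_pt_lim_plus; auto.
    + unfold rhs_deriv, Rdiv. ring.
Qed.

End OpenSet.

Theorem mainTheorem3 (U : R -> R -> Prop)
  (u v ux uy uxy uyy vx vy vxy vxx : R -> R -> R) :
  open2 U -> Ck 3 U u -> Ck 3 U v ->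
  is_dx U u ux -> is_dy U u uy -> is_dy U ux uxy -> is_dy U uy uyy ->
  is_dx U v vx -> is_dy U v vy -> is_dy U vx vxy -> is_dx U vx vxx ->
  (forall x y, U x y ->
     uxy x y + ux x y * uy x y / (2 * (1 + exp ((u x y + v x y) / 2))) = 0) ->
  (forall x y, U x y ->
     vxy x y + vx x y * vy x y / (2 * (1 + exp ((u x y + v x y) / 2))) = 0) ->
  ((forall x y, U x y -> uy x y <> 0) ->
     forall x y, U x y ->
       derivable_pt_lim (fun t => beta1 u v uy vy t y) x 0 /\
       derivable_pt_lim (fun t => beta3 u v uy uyy vy t y) x 0) /\
  ((forall x y, U x y -> vx x y <> 0) ->
     forall x y, U x y ->
       derivable_pt_lim (fun t => alpha1 u v ux vx x t) y 0 /\
       derivable_pt_lim (fun t => alpha3 u v ux vx vxx x t) y 0).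
Proof.
  intros HU Cu Cv Hux Huy Huxy Huyy Hvx Hvy Hvxy Hvxx Pu Pv.
  (* Second order: u_yx = u_xy and v_yx = v_xy. *)
  pose proof (proj1 (C2_mixed_partials U HU u ux uy uxy (Ck_pred U 2 u Cu) Hux Huy) Huxy)
    as Huyx.
  pose proof (proj1 (C2_mixed_partials U HU v vx vy vxy (Ck_pred U 2 v Cv) Hvx Hvy) Hvxy)
    as Hvyx.
  (* Third order: u_yyx = u_xyy and v_xxy = v_xyx. *)
  destruct (Ck_has_dy U 0 uxy (Ck_dy U HU 1 ux uxy (Ck_dx U HU 2 u ux Cu Hux) Huxy))
    as [uxyy Huxyy].
  pose proof (proj1 (C2_mixed_partials U HU uy uxy uyy uxyy (Ck_dy U HU 2 u uy Cu Huy)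
    Huyx Huyy) Huxyy) as Huyyx.
  destruct (Ck_has_dx U 0 vxy (Ck_dx U HU 1 vy vxy (Ck_dy U HU 2 v vy Cv Hvy) Hvyx))
    as [vxyx Hvxyx].
  pose proof (proj2 (C2_mixed_partials U HU vx vxx vxy vxyx (Ck_dx U HU 2 v vx Cv Hvx)
    Hvxx Hvxy) Hvxyx) as Hvxxy.
  split; intros Hnz x y Hxy.
  - now apply (beta_first_integrals U HU u v ux uy uxy uyy vx vy vxy uxyy); auto.
  - now apply (alpha_first_integrals U HU u v ux uy uxy vx vy vxy vxx vxyx); auto.
Qed.
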